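(* Let $n\ge 1$ and let $L \subseteq \{0,1\}^n$ be a nonempty homogeneous language. Then every regular expression describing $L$ has length at least $\mathsf{Arith}(L)$, i.e. $\mathrm{rpn}(L) \geq \mathsf{Arith}(L)$.
   Context: Regular expressions over an alphabet $\Sigma$ are built from $\epsilon$ and letters $a\in\Sigma$ by union $+$, concatenation $\cdot$ and star; expressions are assumed not to contain the symbol $\emptyset$. The length $\mathrm{rpn}(R)$ of an expression $R$ is the number of nodes of its syntax tree, and for a regular language $L$, $\mathrm{rpn}(L)$ is the minimum length of an expression describing $L$. A language is homogeneous if all its words have the same length. A monotone arithmetic formula in variables $x_1,\dots,x_n$ is a rooted tree whose leaves hold a variable $x_i$ or a constant $c\in\mathbb{R}_{\ge 0}$ and whose inner nodes are addition or multiplication gates; its size is its number of nodes. It computes a polynomial $\sum_{a\in A} c_a\prod_{i=1}^n x_i^{a_i}$ with all $c_a>0$, and the finite set $A\subseteq\mathbb{N}^n$ of exponent vectors is called the set produced by the formula. For $A\subseteq \mathbb{N}^n$, $\mathsf{Arith}(A)$ is the minimum size of a monotone arithmetic formula producing exactly $A$ (coefficients are irrelevant). A word $w_1\cdots w_n\in\{0,1\}^n$ is identified with the vector $(w_1,\dots,w_n)$. *)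

From HB Require Import structures.
From mathcomp Require Import all_boot all_order all_algebra.
From mathcomp Require Import Rstruct.
From mathcomp Require Import mpoly.
From Stdlib Require Rdefinitions.
Notation R := Rdefinitions.R.

Set Implicit Arguments.
Unset Strict Implicit.
Unset Printing Implicit Defensive.

Import GRing.Theory Num.Theory.

(* ---------- Regular expressions over Sigma = {0,1} (0 = false, 1 = true) ---------- *)
(* No emptyset symbol, as in the paper. *)
Inductive regex : Type :=
| REps : regex
| RLet : bool -> regex
| RPlus : regex -> regex -> regex
| RCat : regex -> regex -> regex
| RStar : regex -> regex.

Inductive star (L : seq bool -> Prop) : seq bool -> Prop :=
| star_nil : star L [::]
| star_app u v : L u -> star L v -> star L (u ++ v).

Fixpoint lang (r : regex) : seq bool -> Prop :=
  match r with
  | REps => fun w => w = [::]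
  | RLet a => fun w => w = [:: a]
  | RPlus r1 r2 => fun w => lang r1 w \/ lang r2 w
  | RCat r1 r2 => fun w => exists u v, w = u ++ v /\ lang r1 u /\ lang r2 v
  | RStar r1 => star (lang r1)
  end.

Fixpoint rpn (r : regex) : nat :=
  match r with
  | REps | RLet _ => 1
  | RPlus r1 r2 | RCat r1 r2 => (rpn r1 + rpn r2).+1
  | RStar r1 => (rpn r1).+1
  end.

Inductive aformula (n : nat) : Type :=
| FVar : 'I_n -> aformula n
| FConst : R -> aformula n
| FAdd : aformula n -> aformula n -> aformula n
| FMul : aformula n -> aformula n -> aformula n.

Arguments FConst {n}.

Fixpoint monotone n (F : aformula n) : Prop :=
  match F with
  | FVar _ => True
  | FConst c => (0 <= c)%R
  | FAdd F1 F2 | FMul F1 F2 => monotone F1 /\ monotone F2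
  end.

Fixpoint fsize n (F : aformula n) : nat :=
  match F with
  | FVar _ | FConst _ => 1
  | FAdd F1 F2 | FMul F1 F2 => (fsize F1 + fsize F2).+1
  end.

Fixpoint fpoly n (F : aformula n) : {mpoly R[n]} :=
  match F with
  | FVar i => 'X_i
  | FConst c => c%:MP
  | FAdd F1 F2 => fpoly F1 + fpoly F2
  | FMul F1 F2 => fpoly F1 * fpoly F2
  end.

Definition produced n (F : aformula n) : 'X_{1..n} -> Prop :=
  fun m => m \in msupp (fpoly F).

Definition produces n (F : aformula n) (A : 'X_{1..n} -> Prop) : Prop :=
  forall m, produced F m <-> A m.

(* Arith(A) <= k : some monotone formula of size <= k produces exactly A
   (Arith(A) is the minimum such size) *)
Definition Arith_le n (A : 'X_{1..n} -> Prop) (k : nat) : Prop :=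
  exists F : aformula n, monotone F /\ produces F A /\ fsize F <= k.

Definition word_vec n (w : seq bool) : 'X_{1..n} :=
  [multinom (nth false w i : nat) | i < n].

Definition lang_vecs n (L : seq bool -> Prop) : 'X_{1..n} -> Prop :=
  fun m => exists w, L w /\ size w = n /\ m = word_vec n w.

Arguments lang_vecs : clear implicits.
Arguments word_vec : clear implicits.

(* Every subexpression of an expression for a homogeneous language is itself
   homogeneous, so a starred subexpression only describes the empty word and
   every occurrence of a letter sits at one fixed position k of all the words it
   contributes to.  Reading epsilon, the letter 0 and starred subexpressions as
   the constant 1, the letter 1 at position k as x_k, union as + and
   concatenation as *, gives a monotone formula of no larger size.  All its
   coefficients are nonnegative, so no monomial cancels and the formula
   produces exactly the vectors of the words of L. *)

From mathcomp Require Import all_boot all_algebra.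
From mathcomp Require Import Rstruct mpoly.
Import GRing.Theory Num.Theory.

Set Implicit Arguments.
Unset Strict Implicit.
Unset Printing Implicit Defensive.

Section NonnegativeSupport.
Local Open Scope ring_scope.
Variables (K : numDomainType) (n : nat).
Implicit Types (p q : {mpoly K[n]}) (m : 'X_{1..n}).

Definition nneg_mpoly p := forall m, 0 <= p@_m.

Lemma nneg_mpolyC (c : K) : 0 <= c -> nneg_mpoly c%:MP.
Proof. by move=> c_ge0 m; rewrite mcoeffC mulr_ge0 ?ler0n. Qed.

Lemma nneg_mpolyX i : nneg_mpoly 'X_i.
Proof. by move=> m; rewrite mcoeffX ler0n. Qed.

Lemma nneg_mpolyD p q : nneg_mpoly p -> nneg_mpoly q -> nneg_mpoly (p + q).
Proof. by move=> p_ge0 q_ge0 m; rewrite mcoeffD addr_ge0. Qed.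

Lemma nneg_mpolyM p q : nneg_mpoly p -> nneg_mpoly q -> nneg_mpoly (p * q).
Proof. by move=> p_ge0 q_ge0 m; rewrite mcoeffM sumr_ge0 // => i _; rewrite mulr_ge0. Qed.

Lemma msuppD_nneg p q m : nneg_mpoly p -> nneg_mpoly q ->
  (m \in msupp (p + q)) = (m \in msupp p) || (m \in msupp q).
Proof. by move=> p_ge0 q_ge0; rewrite !mcoeff_msupp mcoeffD paddr_eq0 // negb_and. Qed.

(* Without negative coefficients no cancellation can occur, so the support of
   a product is the Minkowski sum of the supports. *)
Lemma msuppM_nneg p q m : nneg_mpoly p -> nneg_mpoly q ->
  m \in msupp (p * q) <->
  exists m1 m2, m = (m1 + m2)%MM /\ m1 \in msupp p /\ m2 \in msupp q.
Proof.
move=> p_ge0 q_ge0; have pq_ge0 m1 m2 : 0 <= p@_m1 * q@_m2 by rewrite mulr_ge0.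
rewrite mcoeff_msupp mcoeffM psumr_neq0 => [|i _]; last exact: pq_ge0.
split.
- case/hasP=> -[m1 m2] _ /andP[/eqP Em pq_gt0]; exists m1, m2; split=> //.
  move: pq_gt0; rewrite lt0r mulf_eq0 negb_or !mcoeff_msupp.
  by case/andP=> /andP[].
- case=> m1 [m2 [-> [m1_supp m2_supp]]].
  have lt_m1 : (mdeg m1 < (mdeg (m1 + m2)).+1)%N by rewrite mdegD ltnS leq_addr.
  have lt_m2 : (mdeg m2 < (mdeg (m1 + m2)).+1)%N by rewrite mdegD ltnS leq_addl.
  apply/hasP; exists (BMultinom lt_m1, BMultinom lt_m2); first exact: mem_index_enum.
  rewrite /= eqxx lt0r pq_ge0 andbT.
  by rewrite mulf_neq0 // -mcoeff_msupp.
Qed.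

End NonnegativeSupport.

Section MonotoneFormulas.
Variable n : nat.
Implicit Types (F : aformula n) (m : 'X_{1..n}).

Lemma fpoly_nneg F : monotone F -> nneg_mpoly (fpoly F).
Proof.
elim: F => [i|c|F1 IH1 F2 IH2|F1 IH1 F2 IH2] /=.
- by move=> _; apply: nneg_mpolyX.
- exact: nneg_mpolyC.
- by case=> /IH1 ? /IH2 ?; apply: nneg_mpolyD.
- by case=> /IH1 ? /IH2 ?; apply: nneg_mpolyM.
Qed.

Lemma produced_one m : produced (FConst 1%R : aformula n) m <-> m = 0%MM.
Proof. by rewrite /produced /= msupp1 inE; split=> /eqP. Qed.

Lemma produced_var i m : produced (FVar i) m <-> m = U_(i)%MM.
Proof. by rewrite /produced /= msuppX inE; split=> /eqP. Qed.

Lemma produced_add F1 F2 m : monotone F1 -> monotone F2 ->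
  produced (FAdd F1 F2) m <-> produced F1 m \/ produced F2 m.
Proof.
by move=> /fpoly_nneg ? /fpoly_nneg ?; rewrite /produced /= msuppD_nneg //; split=> /orP.
Qed.

Lemma produced_mul F1 F2 m : monotone F1 -> monotone F2 ->
  produced (FMul F1 F2) m <->
  exists m1 m2, m = (m1 + m2)%MM /\ produced F1 m1 /\ produced F2 m2.
Proof. by move=> /fpoly_nneg ? /fpoly_nneg ?; apply: msuppM_nneg. Qed.

End MonotoneFormulas.

Lemma lang_inhabited r : exists w, lang r w.
Proof.
elim: r => [|a|r1 [u Hu] r2 _|r1 [u Hu] r2 [v Hv]|r1 _] /=.
- by exists [::].
- by exists [:: a].
- by exists u; left.
- by exists (u ++ v), u, v.
- by exists [::]; apply: star_nil.
Qed.

(* The length of the words of [r], when [r] is homogeneous; starred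
   subexpressions of a homogeneous expression only describe the empty word. *)
Fixpoint wlen (r : regex) : nat :=
  match r with
  | REps | RStar _ => 0
  | RLet _ => 1
  | RPlus r1 _ => wlen r1
  | RCat r1 r2 => wlen r1 + wlen r2
  end.

Definition homogeneous (r : regex) := forall w, lang r w -> size w = wlen r.

Lemma wlen_unique r l : (forall w, lang r w -> size w = l) -> l = wlen r.
Proof.
elim: r l => [|a|r1 IH1 r2 _|r1 IH1 r2 IH2|r1 _] l r_l /=.
- by rewrite -(r_l [::]).
- by rewrite -(r_l [:: a]).
- by apply: IH1 => w Hw; apply: r_l; left.
- have [u0 Hu0] := lang_inhabited r1; have [v0 Hv0] := lang_inhabited r2.
  have size_cat0 u v : lang r1 u -> lang r2 v -> size u + size v = l.
    by move=> Hu Hv; rewrite -size_cat; apply: r_l; exists u, v.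
  rewrite -(size_cat0 u0 v0) //; congr (_ + _).
  + by apply: IH1 => u Hu; apply/eqP; rewrite -(eqn_add2r (size v0)) !size_cat0.
  + by apply: IH2 => v Hv; apply/eqP; rewrite -(eqn_add2l (size u0)) !size_cat0.
- by rewrite -(r_l [::]) //; apply: star_nil.
Qed.

Lemma homogeneous_plus r1 r2 :
  homogeneous (RPlus r1 r2) -> [/\ homogeneous r1, homogeneous r2 & wlen r2 = wlen r1].
Proof.
move=> r_homog; have r2_len : forall v, lang r2 v -> size v = wlen r1.
  by move=> v Hv; apply: r_homog; right.
have e_len := wlen_unique r2_len.
split=> [u Hu|v Hv|]; rewrite -?e_len //; first by apply: r_homog; left.
exact: r2_len.
Qed.

Lemma homogeneous_cat r1 r2 :
  homogeneous (RCat r1 r2) -> homogeneous r1 /\ homogeneous r2.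
Proof.
move=> r_homog; have [u0 Hu0] := lang_inhabited r1; have [v0 Hv0] := lang_inhabited r2.
have size_cat0 u v : lang r1 u -> lang r2 v -> size u + size v = wlen r1 + wlen r2.
  by move=> Hu Hv; rewrite -size_cat; apply: r_homog; exists u, v.
have r1_len u : lang r1 u -> size u = wlen r1 + wlen r2 - size v0.
  by move=> Hu; rewrite -(size_cat0 u v0) // addnK.
have r2_len v : lang r2 v -> size v = wlen r1 + wlen r2 - size u0.
  by move=> Hv; rewrite -(size_cat0 u0 v) // addKn.
split=> w Hw; first by rewrite -(wlen_unique r1_len) r1_len.
by rewrite -(wlen_unique r2_len) r2_len.
Qed.

Lemma homogeneous_star r w : homogeneous (RStar r) -> lang (RStar r) w <-> w = [::].
Proof. by move=> r_homog; split=> [/r_homog/size0nil | ->] //; apply: star_nil. Qed.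

Section Translation.
Variable n : nat.
Implicit Types (r : regex) (m : 'X_{1..n}).

Lemma word_vec_cat s v :
  word_vec n (s ++ v) = (word_vec n s + word_vec n (nseq (size s) false ++ v))%MM.
Proof.
apply/mnmP=> i; rewrite mnmDE !mnmE !nth_cat size_nseq nth_nseq.
case: (ltnP i (size s)) => [_|le_s_i]; first by rewrite addn0.
by rewrite (nth_default _ le_s_i).
Qed.

Lemma word_vec_nseq k : word_vec n (nseq k false) = 0%MM.
Proof. by apply/mnmP=> i; rewrite mnmE mnm0E nth_nseq if_same. Qed.

Lemma word_vec_letter k b (lt_k_n : k < n) :
  word_vec n (nseq k false ++ [:: b]) = if b then U_(Ordinal lt_k_n)%MM else 0%MM.
Proof.
apply/mnmP=> i; rewrite mnmE nth_cat size_nseq nth_nseq.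
case: b; rewrite ?mnm1E ?mnm0E; last by case: ltnP => // _; case: (_ - _) => [|[]].
rewrite -val_eqE /=; case: ltngtP => [//| lt_k_i | <-]; last by rewrite subnn.
by move: lt_k_i; rewrite -subn_gt0; case: (_ - _) => [|[]].
Qed.

(* The fallback [FConst 1] for [k >= n] is never reached below. *)
Definition letter_formula (b : bool) (k : nat) : aformula n :=
  if b then oapp (@FVar n) (FConst 1%R) (insub k) else FConst 1%R.

Lemma produced_letter_formula b k m : k < n ->
  produced (letter_formula b k) m <-> m = word_vec n (nseq k false ++ [:: b]).
Proof.
move=> lt_k_n; rewrite word_vec_letter /letter_formula.
by case: b; rewrite ?(insubT (fun i => i < n) lt_k_n) /= ?produced_var ?produced_one.
Qed.

Fixpoint to_formula r (k : nat) : aformula n :=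
  match r with
  | REps | RStar _ => FConst 1%R
  | RLet b => letter_formula b k
  | RPlus r1 r2 => FAdd (to_formula r1 k) (to_formula r2 k)
  | RCat r1 r2 => FMul (to_formula r1 k) (to_formula r2 (k + wlen r1))
  end.

Lemma to_formula_monotone r k : monotone (to_formula r k).
Proof.
have one_ge0 : (0 <= 1 :> R)%R by apply: ler01.
elim: r k => [|[]|r1 IH1 r2 IH2|r1 IH1 r2 IH2|r1 _] k //=.
by case: insub.
Qed.

Lemma fsize_to_formula r k : fsize (to_formula r k) <= rpn r.
Proof.
elim: r k => [|[]|r1 IH1 r2 IH2|r1 IH1 r2 IH2|r1 _] k //=; last 2 first.
- by rewrite ltnS leq_add.
- by rewrite ltnS leq_add.
by case: insub.
Qed.

Lemma produced_to_formula r k m : homogeneous r -> k + wlen r <= n ->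
  produced (to_formula r k) m <-> exists w, lang r w /\ m = word_vec n (nseq k false ++ w).
Proof.
have produced_eps (P : seq bool -> Prop) k' m' : (forall w, P w <-> w = [::]) ->
    produced (FConst 1%R : aformula n) m' <->
    exists w, P w /\ m' = word_vec n (nseq k' false ++ w).
  move=> P_eps; rewrite produced_one.
  split=> [->|[w [/P_eps-> ->]]]; last by rewrite cats0 word_vec_nseq.
  by exists [::]; rewrite P_eps cats0 word_vec_nseq.
elim: r k m => [|b|r1 IH1 r2 IH2|r1 IH1 r2 IH2|r1 _] k m r_homog /= le_n.
- exact: produced_eps.
- rewrite produced_letter_formula; last by rewrite -addn1.
  by split=> [->|[w [-> ->]]]; first exists [:: b].
- case/homogeneous_plus: r_homog => r1_homog r2_homog e_wlen.
  have le_n2 : k + wlen r2 <= n by rewrite e_wlen.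
  rewrite produced_add; try exact: to_formula_monotone.
  split=> [[/(IH1 _ _ r1_homog le_n) | /(IH2 _ _ r2_homog le_n2)] [w [Hw ->]]
          | [w [[] Hw ->]]].
  + by exists w; split; first left.
  + by exists w; split; first right.
  + by left; apply/(IH1 _ _ r1_homog le_n); exists w.
  + by right; apply/(IH2 _ _ r2_homog le_n2); exists w.
- case/homogeneous_cat: r_homog => r1_homog r2_homog.
  have le_n1 : k + wlen r1 <= n by apply: leq_trans le_n; rewrite addnA leq_addr.
  have le_n2 : k + wlen r1 + wlen r2 <= n by rewrite -addnA.
  have word_vec_cat3 u v : lang r1 u -> word_vec n (nseq k false ++ u ++ v) =
      (word_vec n (nseq k false ++ u) + word_vec n (nseq (k + wlen r1) false ++ v))%MM.
    by move=> /r1_homog size_u; rewrite catA word_vec_cat size_cat size_nseq size_u.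
  rewrite produced_mul; try exact: to_formula_monotone.
  split.
  + case=> _ [_ [-> [/(IH1 _ _ r1_homog le_n1) [u [Hu ->]]
                      /(IH2 _ _ r2_homog le_n2) [v [Hv ->]]]]].
    by exists (u ++ v); rewrite word_vec_cat3 //; split=> //; exists u, v.
  + case=> _ [[u [v [-> [Hu Hv]]]] ->]; rewrite word_vec_cat3 //.
    exists (word_vec n (nseq k false ++ u)), (word_vec n (nseq (k + wlen r1) false ++ v)).
    split=> //; split.
    * by apply/(IH1 _ _ r1_homog le_n1); exists u.
    * by apply/(IH2 _ _ r2_homog le_n2); exists v.
- by apply: produced_eps => w; apply: homogeneous_star.
Qed.

End Translation.

Theorem theorem4p2 (n : nat) (L : seq bool -> Prop) :
  1 <= n ->
  (exists w, L w) ->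
  (forall w, L w -> size w = n) ->
  forall r : regex, (forall w, lang r w <-> L w) ->
  Arith_le (lang_vecs n L) (rpn r).
Proof.
move=> _ _ L_size r r_L.
have r_size w : lang r w -> size w = n by move/r_L/L_size.
have wlen_r := wlen_unique r_size.
have r_homog : homogeneous r by rewrite /homogeneous -wlen_r.
exists (to_formula n r 0); split; first exact: to_formula_monotone.
split; last exact: fsize_to_formula.
move=> m; rewrite produced_to_formula -?wlen_r //.
split=> [[w [rw ->]] | [w [/r_L rw [_ ->]]]]; exists w => //.
by split; [apply/r_L | split; first exact: r_size].
Qed.
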